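(* Let $n\geq1$. The monoid $M_n$ is right-cancellative and admits conditional left-lcms: any two elements of $M_n$ that admit a common left-multiple admit a left-lcm. (Equivalently, the opposite monoid $M_n^{\mathrm{op}}$ is left-cancellative and admits conditional right-lcms.)
   Context: $M_n$ denotes the monoid with generators $\rho_1,\dots,\rho_n$ and relations $\rho_1\rho_n\rho_i=\rho_{i+1}\rho_n$ for $1\leq i\leq n-1$. $c$ is a left-multiple of $a$ if $c=ba$ for some $b$. A left-lcm of $a,b$ is a common left-multiple of $a$ and $b$ that right-divides every common left-multiple of $a$ and $b$. *)

From mathcomp Require Import all_boot.
Set Implicit Arguments. Unset Strict Implicit. Unset Printing Implicit Defensive.

(* Elements of M_n are represented by words over the alphabet {1,...,n};
   the letter i stands for the generator rho_i.  Concatenation is the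
   monoid product, [::] the identity. *)
Definition Mword (n : nat) (w : seq nat) : bool := all (fun a => 0 < a <= n) w.

Inductive Mcong (n : nat) : seq nat -> seq nat -> Prop :=
| Mcong_refl w : Mcong n w w
| Mcong_sym u v : Mcong n u v -> Mcong n v u
| Mcong_trans u v w : Mcong n u v -> Mcong n v w -> Mcong n u w
| Mcong_rel (u v : seq nat) (i : nat) : 1 <= i <= n - 1 ->
    Mcong n (u ++ [:: 1; n; i] ++ v) (u ++ [:: i.+1; n] ++ v).

Definition Mleft_multiple (n : nat) (c a : seq nat) : Prop :=
  exists b, Mword n b /\ Mcong n c (b ++ a).

Definition Mleft_lcm (n : nat) (m a b : seq nat) : Prop :=
  Mleft_multiple n m a /\ Mleft_multiple n m b /\
  forall c, Mword n c -> Mleft_multiple n c a -> Mleft_multiple n c b ->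
    Mleft_multiple n c m.

(* Elements are words over {1,...,n}.  Every relation preserves the letter sum
   (weight) of a word, which is the induction measure throughout.

   For letters s <> t we write down explicit words [compl n s t] with
   [compl n s t ++ [:: s] = compl n t s ++ [:: t]] in M_n: the left-lcm of s and t.
   The heart of the file is the last-letter lemma [last_letters_split]: if
   u s = v t in M_n then either s = t and u = v, or s <> t and there is w with
   u = w (compl s t) and v = w (compl t s).  It is proved by induction on the
   weight and then along a chain of elementary rewriting steps, checking that
   the conclusion survives every step touching the final letter.  Right
   cancellativity follows by cancelling letters one at a time, and left-lcms
   are built by induction on the weight of a common multiple: equal final
   letters are peeled off, distinct final letters s, t are replaced by the
   complements of s and t, using two smaller lcms. *)
From Stdlib Require Import Relations.
From mathcomp Require Import all_boot zify.
Set Implicit Arguments. Unset Strict Implicit. Unset Printing Implicit Defensive.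

Lemma Mcong_ctx n p x y q : Mcong n x y -> Mcong n (p ++ x ++ q) (p ++ y ++ q).
Proof.
elim=> [w|u v _ IH|u v w _ IH1 _ IH2|u v i Hi].
- exact: Mcong_refl.
- exact: Mcong_sym.
- exact: Mcong_trans IH1 IH2.
- have -> : p ++ (u ++ [:: 1; n; i] ++ v) ++ q = (p ++ u) ++ [:: 1; n; i] ++ (v ++ q)
    by rewrite !catA.
  have -> : p ++ (u ++ [:: i.+1; n] ++ v) ++ q = (p ++ u) ++ [:: i.+1; n] ++ (v ++ q)
    by rewrite !catA.
  exact: Mcong_rel.
Qed.

Lemma Mcong_cat n x x' y y' : Mcong n x x' -> Mcong n y y' -> Mcong n (x ++ y) (x' ++ y').
Proof.
move=> Hx Hy; apply: (@Mcong_trans _ _ (x' ++ y)).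
- by have := @Mcong_ctx n [::] x x' y Hx.
- by have := @Mcong_ctx n x' y y' [::] Hy; rewrite !cats0.
Qed.

Lemma Mcong_catr n x y c : Mcong n x y -> Mcong n (x ++ c) (y ++ c).
Proof. by move=> H; apply: Mcong_cat H (Mcong_refl _ _). Qed.

Lemma Mcong_catl n x y c : Mcong n x y -> Mcong n (c ++ x) (c ++ y).
Proof. by move=> H; apply: Mcong_cat (Mcong_refl _ _) H. Qed.

Lemma Mcong_cons n a x y : Mcong n x y -> Mcong n (a :: x) (a :: y).
Proof. exact: (@Mcong_catl n x y [:: a]). Qed.

Lemma Mcong_sumn n x y : Mcong n x y -> sumn x = sumn y.
Proof.
elim=> [w|u v _ ->|u v w _ -> _ ->|u v i _] //.
rewrite !sumn_cat /=; lia.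
Qed.

Lemma Mcong_Mword n x y : Mcong n x y -> Mword n x = Mword n y.
Proof.
elim=> [w|u v _ ->|u v w _ -> _ ->|u v i Hi] //.
rewrite /Mword !all_cat /=.
have -> : (0 < i <= n) = true by apply/idP; lia.
have -> : (i < n) = true by apply/idP; lia.
by have -> : (0 < n) = true by apply/idP; lia.
Qed.

Lemma Mword_cat n x y : Mword n (x ++ y) = Mword n x && Mword n y.
Proof. by rewrite /Mword all_cat. Qed.

Lemma Mword_rcons n x a : Mword n (rcons x a) = Mword n x && (0 < a <= n).
Proof. by rewrite /Mword all_rcons andbC. Qed.

Lemma lmult_refl n a : Mleft_multiple n a a.
Proof. by exists [::]; split => //; exact: Mcong_refl. Qed.

Lemma lmult_cat n b a : Mword n b -> Mleft_multiple n (b ++ a) a.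
Proof. by move=> Hb; exists b; split => //; exact: Mcong_refl. Qed.

Lemma lmult_nil n a : Mword n a -> Mleft_multiple n a [::].
Proof. by move=> Ha; rewrite -[a in Mleft_multiple _ a]cats0; exact: lmult_cat. Qed.

Lemma lmult_congl n c c' a : Mcong n c c' -> Mleft_multiple n c a -> Mleft_multiple n c' a.
Proof. by move=> H [b [Hb Hc]]; exists b; split => //; exact: Mcong_trans (Mcong_sym H) Hc. Qed.

Lemma lmult_trans n c b a :
  Mleft_multiple n c b -> Mleft_multiple n b a -> Mleft_multiple n c a.
Proof.
move=> [x [Hx Hc]] [y [Hy Hb]]; exists (x ++ y); split; first by rewrite Mword_cat Hx.
by rewrite -catA; exact: Mcong_trans Hc (Mcong_catl _ Hb).
Qed.

Lemma lmult_catr n c a s : Mleft_multiple n c a -> Mleft_multiple n (c ++ s) (a ++ s).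
Proof. by move=> [b [Hb Hc]]; exists b; split => //; rewrite catA; exact: Mcong_catr. Qed.

Lemma lmult_rcons_inv n c a s : Mword n c -> Mleft_multiple n c (rcons a s) ->
  exists c0, [/\ Mword n c0, Mcong n c (rcons c0 s) & Mleft_multiple n c0 a].
Proof.
move=> Hc [x [Hx Hxc]]; exists (x ++ a); rewrite rcons_cat; split => //.
- by move: Hc; rewrite (Mcong_Mword Hxc) -rcons_cat Mword_rcons => /andP[].
- exact: lmult_cat.
Qed.

Fixpoint pow1n (n k : nat) : seq nat :=
  if k is k'.+1 then [:: 1, n & pow1n n k'] else [::].

Lemma pow1n_rcons n k : pow1n n k ++ [:: 1; n] = pow1n n k.+1.
Proof. by elim: k => //= k ->. Qed.

Lemma Mword_pow1n n k : 0 < n -> Mword n (pow1n n k).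
Proof. by move=> Hn; elim: k => //= k ->; rewrite Hn leqnn. Qed.

Lemma pow1n_push n m a : 0 < a -> a + m <= n ->
  Mcong n (pow1n n m ++ [:: a]) ((a + m) :: nseq m n).
Proof.
elim: m => [|m IH] Ha Ham /=; first by rewrite addn0; exact: Mcong_refl.
apply: (@Mcong_trans _ _ [:: 1, n, a + m & nseq m n]).
- by apply/Mcong_cons/Mcong_cons/IH => //; lia.
- have H : 1 <= a + m <= n - 1 by lia.
  by rewrite addnS; exact: (@Mcong_rel n [::] (nseq m n) (a + m) H).
Qed.

(* For letters s, t < n: [core_compl n s t ++ [:: s.+1]] is symmetric in s, t. *)
Definition core_compl n s t :=
  if s < t then pow1n n (n - t) else (t + (n - s)).+1 :: pow1n n (n - s).-1.

(* [compl n s t] is the left complement of t by s:  compl s t · s = compl t s · t. *)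
Definition compl n s t :=
  if s == n then [:: t.+1]
  else if t == n then [:: 1; n] else core_compl n s t ++ [:: 1; n].

Lemma core_compl_lcm_lt n i j : 0 < i -> i < j -> j < n ->
  Mcong n (core_compl n i j ++ [:: i.+1]) (core_compl n j i ++ [:: j.+1]).
Proof.
move=> Hi ij jn; rewrite /core_compl ij ltnNge (ltnW ij) /=.
have [k Hk] : exists k, n - j = k.+1 by exists (n - j).-1; lia.
rewrite Hk; apply: (@Mcong_trans _ _ ((i.+1 + k.+1) :: nseq k.+1 n)).
- by apply: pow1n_push; lia.
- apply: Mcong_sym; apply: (@Mcong_trans _ _ ((i + k.+1).+1 :: (j.+1 + k) :: nseq k n)).
  + by apply/Mcong_cons/pow1n_push; lia.
  + have -> : j.+1 + k = n by lia.
    by rewrite addSn; exact: Mcong_refl.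
Qed.

Lemma core_compl_lcm n i j : 0 < i < n -> 0 < j < n -> i != j ->
  Mcong n (core_compl n i j ++ [:: i.+1]) (core_compl n j i ++ [:: j.+1]).
Proof.
move=> /andP[Hi Hin] /andP[Hj Hjn]; case: (ltngtP i j) => [ij|ji|->] // _.
- exact: core_compl_lcm_lt.
- exact/Mcong_sym/core_compl_lcm_lt.
Qed.

Lemma compl_lcm n s t : 0 < s <= n -> 0 < t <= n -> s != t ->
  Mcong n (compl n s t ++ [:: s]) (compl n t s ++ [:: t]).
Proof.
move=> Hs Ht Hne; rewrite /compl.
case: (eqVneq s n) => [Esn|Nsn].
  subst s; rewrite eq_sym (negbTE Hne) /=; apply: Mcong_sym.
  have H : 1 <= t <= n - 1 by move: Hne; rewrite eq_sym => /eqP; lia.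
  exact: (@Mcong_rel n [::] [::] t H).
case: (eqVneq t n) => [Etn|Ntn].
  subst t; have H : 1 <= s <= n - 1 by move: Nsn => /eqP; lia.
  exact: (@Mcong_rel n [::] [::] s H).
have end_rel a b : 0 < a <= n -> a != n ->
    Mcong n ((core_compl n a b ++ [:: 1; n]) ++ [:: a])
            ((core_compl n a b ++ [:: a.+1]) ++ [:: n]).
  move=> Ha Nan; rewrite -!catA.
  have H : 1 <= a <= n - 1 by move: Nan => /eqP; lia.
  exact: (@Mcong_rel n (core_compl n a b) [::] a H).
apply: Mcong_trans (end_rel s t Hs Nsn) _.
apply: Mcong_sym; apply: Mcong_trans (end_rel t s Ht Ntn) _.
apply/Mcong_catr/Mcong_sym/core_compl_lcm => //.
- by move: Nsn => /eqP; lia.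
- by move: Ntn => /eqP; lia.
Qed.

Lemma compl_shift n a b : 0 < a < n -> 0 < b < n -> a != b ->
  compl n a.+1 b.+1 ++ [:: 1; n] = compl n a b.
Proof.
move=> Ha Hb Hne; rewrite /compl.
have -> : (a == n) = false by apply/eqP; lia.
have -> : (b == n) = false by apply/eqP; lia.
case: (eqVneq a.+1 n) => [Ean|Nan].
  have ba : b < a by move: Hne => /eqP; lia.
  rewrite /core_compl ltnNge (ltnW ba) /=.
  have -> : n - a = 1 by lia.
  by have -> : b + 1 = b.+1 by lia.
case: (eqVneq b.+1 n) => [Ebn|Nbn].
  have ab : a < b by move: Hne => /eqP; lia.
  rewrite /core_compl ab /=.
  by have -> : n - b = 1 by lia.
congr (_ ++ _); rewrite /core_compl ltnS; case: ltnP => Hab.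
- by rewrite pow1n_rcons; congr pow1n; lia.
- rewrite /= pow1n_rcons; have -> : b.+1 + (n - a.+1) = b + (n - a) by lia.
  by congr (_ :: pow1n _ _); lia.
Qed.

Lemma Mword_compl n s t : 0 < s <= n -> 0 < t <= n -> s != t -> Mword n (compl n s t).
Proof.
move=> Hs Ht Hne; have Hn : 0 < n by lia.
rewrite /compl; case: (eqVneq s n) => [Esn|Nsn].
  by rewrite /Mword /= andbT; move: Hne; rewrite Esn => /eqP; lia.
case: (eqVneq t n) => [Etn|Ntn]; first by rewrite /Mword /= Hn leqnn.
rewrite Mword_cat /core_compl; apply/andP; split; last by rewrite /Mword /= Hn leqnn.
case: ltnP => Hts; first exact: Mword_pow1n.
rewrite /Mword /=; apply/andP; split; last exact: Mword_pow1n.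
by move: Nsn Ntn Hne Hts => /eqP ? /eqP ? /eqP ? ?; lia.
Qed.

Definition step n (x y : seq nat) := exists u v i, 1 <= i <= n - 1 /\
  x = u ++ [:: 1; n; i] ++ v /\ y = u ++ [:: i.+1; n] ++ v.

Lemma step_Mcong n x y : step n x y -> Mcong n x y.
Proof. by case=> u [v [i [Hi [-> ->]]]]; exact: Mcong_rel. Qed.

Lemma Mcong_chain n x y : Mcong n x y -> clos_refl_sym_trans_n1 _ (step n) x y.
Proof.
move=> H; apply/clos_rst_rstn1_iff.
elim: H => [w|u v _ IH|u v w _ IH1 _ IH2|u v i Hi].
- exact: rst_refl.
- exact: rst_sym.
- exact: rst_trans IH1 IH2.
- by apply: rst_step; exists u, v, i.
Qed.

Lemma chain_Mcong n x y : clos_refl_sym_trans_n1 _ (step n) x y -> Mcong n x y.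
Proof.
elim=> [|y' z Hs _ IH]; first exact: Mcong_refl.
apply: Mcong_trans IH _; case: Hs => /step_Mcong // H; exact: Mcong_sym.
Qed.

Lemma step_rcons_inv n v' t' Y : step n (rcons v' t') Y ->
  (exists p i, [/\ 1 <= i <= n - 1, v' = p ++ [:: 1; n], t' = i &
      Y = rcons (p ++ [:: i.+1]) n]) \/
  (exists v, Y = rcons v t' /\ step n v' v).
Proof.
case=> u [w] [i] [Hi [Hx ->]]; case/lastP: w Hx => [|w z] Hx.
- left; exists u, i.
  have : rcons v' t' = rcons (u ++ [:: 1; n]) i by rewrite Hx cats0 -cats1 -catA.
  by case/rcons_inj => -> ->; split => //; rewrite cats0 -cats1 -catA.
- right; move: Hx; rewrite -!rcons_cat => /rcons_inj [-> ->].
  by exists (u ++ [:: i.+1; n] ++ w); split => //; exists u, w, i.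
Qed.

Definition lcm_split n s t u v :=
  if s == t then Mcong n u v
  else exists w, Mcong n u (w ++ compl n s t) /\ Mcong n v (w ++ compl n t s).

Lemma lcm_split_congr n s t u v v' :
  lcm_split n s t u v' -> Mcong n v' v -> lcm_split n s t u v.
Proof.
rewrite /lcm_split; case: ifP => _; first exact: Mcong_trans.
move=> [w [H1 H2]] H3; exists w; split => //; apply: Mcong_trans (Mcong_sym H3) H2.
Qed.

Definition split_below n N := forall u s v t, sumn (rcons u s) < N ->
  Mword n (rcons u s) -> Mcong n (rcons u s) (rcons v t) -> lcm_split n s t u v.

(* Splitting (with s = t) cancels a final letter, hence any final segment. *)
Lemma cancel_below n N : split_below n N -> forall c a b, sumn (a ++ c) < N ->
  Mword n (a ++ c) -> Mcong n (a ++ c) (b ++ c) -> Mcong n a b.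
Proof.
move=> Hsplit; elim/last_ind => [|c z IHc] a b; first by rewrite !cats0.
rewrite -!rcons_cat => Hw Ha H.
have := Hsplit _ _ _ _ Hw Ha H; rewrite /lcm_split eqxx => H'.
apply: IHc H'; first by move: Hw; rewrite sumn_rcons; lia.
by move: Ha; rewrite Mword_rcons => /andP[].
Qed.

Lemma split_step_fwd n N u s p i : split_below n N ->
  sumn (rcons (p ++ [:: 1; n]) i) <= N -> Mword n (rcons (p ++ [:: 1; n]) i) ->
  1 <= i <= n - 1 -> 0 < s <= n ->
  lcm_split n s i u (p ++ [:: 1; n]) -> lcm_split n s n u (p ++ [:: i.+1]).
Proof.
move=> /cancel_below canc hN hW Hi Hs.
have hW' : Mword n (p ++ [:: 1; n]) by move: hW; rewrite Mword_rcons => /andP[].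
have hN' : sumn (p ++ [:: 1; n]) < N by move: hN; rewrite sumn_rcons; lia.
have Nin : (i == n) = false by apply/eqP; lia.
rewrite /lcm_split; case: (eqVneq s i) => [->|Nsi].
  by rewrite Nin => H; exists p; rewrite /compl Nin eqxx; split => //; exact: Mcong_refl.
case: (eqVneq s n) => [Esn|Nsn].
  subst s; case=> w [H1 H2]; rewrite /compl eqxx Nin in H1 H2.
  apply: Mcong_trans H1 _; apply/Mcong_catr/Mcong_sym; exact: canc H2.
case=> w [H1 H2]; rewrite /compl (negbTE Nsn) Nin in H1 H2.
have Hp : Mcong n p (w ++ core_compl n i s) by apply: (canc [:: 1; n]); rewrite // -catA.
exists (w ++ core_compl n s i); rewrite /compl (negbTE Nsn) eqxx -catA; split => //.
apply: (@Mcong_trans _ _ (w ++ core_compl n i s ++ [:: i.+1])).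
  by rewrite catA; exact: Mcong_catr.
rewrite -catA; apply/Mcong_catl/core_compl_lcm; first lia.
- by move: Nsn => /eqP; lia.
- by rewrite eq_sym.
Qed.

(* The splitting survives the step  p (i+1) · n  -->  p 1 n · i; the case of
   three distinct letters uses the splitting at lower weight and [compl_shift]. *)
Lemma split_step_bwd n N u s p i : split_below n N ->
  sumn (rcons (p ++ [:: i.+1]) n) <= N -> Mword n (rcons (p ++ [:: i.+1]) n) ->
  1 <= i <= n - 1 -> 0 < s <= n ->
  lcm_split n s n u (p ++ [:: i.+1]) -> lcm_split n s i u (p ++ [:: 1; n]).
Proof.
move=> Hsplit hN hW Hi Hs; have canc := cancel_below Hsplit.
have hW' : Mword n (p ++ [:: i.+1]) by move: hW; rewrite Mword_rcons => /andP[].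
have hN' : sumn (p ++ [:: i.+1]) < N by move: hN; rewrite sumn_rcons; lia.
have Nin : (i == n) = false by apply/eqP; lia.
rewrite /lcm_split; case: (eqVneq s n) => [->|Nsn].
  rewrite eq_sym Nin => H; exists p; rewrite /compl eqxx Nin; split => //.
  exact: Mcong_refl.
case: (eqVneq s i) => [Esi|Nsi].
  subst s; case=> w [H1 H2]; rewrite /compl eqxx Nin in H1 H2.
  apply: Mcong_trans H1 _; apply/Mcong_catr/Mcong_sym; exact: canc H2.
case=> w [H1 H2]; rewrite /compl (negbTE Nsn) eqxx in H1 H2.
have : lcm_split n s.+1 i.+1 w p.
  apply: Hsplit; rewrite -!cats1 -?(Mcong_sumn H2) -?(Mcong_Mword H2) //.
  exact: Mcong_sym.
rewrite /lcm_split eqSS (negbTE Nsi) => -[w' [R1 R2]].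
have Hs' : 0 < s < n by move: Nsn => /eqP; lia.
have Hi' : 0 < i < n by lia.
exists w'; split.
- by apply: Mcong_trans H1 _; rewrite -(compl_shift Hs' Hi' Nsi) catA; exact: Mcong_catr.
- rewrite -(compl_shift Hi' Hs') ?catA 1?eq_sym //; exact: Mcong_catr.
Qed.

Lemma split_step n N u s v' t' Z : split_below n N ->
  sumn (rcons v' t') <= N -> Mword n (rcons v' t') -> 0 < s <= n ->
  lcm_split n s t' u v' -> step n (rcons v' t') Z \/ step n Z (rcons v' t') ->
  forall v t, Z = rcons v t -> lcm_split n s t u v.
Proof.
move=> Hsplit hN hW Hs R [] Hst v t EZ; subst Z.
- case: (step_rcons_inv Hst) => [[p [i [Hi Ev' Et' EY]]]|[v0 [EY Hst']]].
  + subst v' t'; case/rcons_inj: EY => -> ->; exact: split_step_fwd Hsplit hN hW Hi Hs R.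
  + by case/rcons_inj: EY => -> ->; apply: lcm_split_congr R _; exact: step_Mcong.
- case: (step_rcons_inv Hst) => [[p [i [Hi -> -> EY]]]|[v0 [EY Hst']]].
  + case/rcons_inj: EY => Ev' Et'; subst v' t'; exact: split_step_bwd Hsplit hN hW Hi Hs R.
  + case/rcons_inj: EY => Ev' Et'; subst v' t'.
    by apply: lcm_split_congr R _; apply: Mcong_sym; exact: step_Mcong.
Qed.

Lemma split_all n N : split_below n N.
Proof.
elim: N => [|N IH] u s v t HN Hw Hc //.
have Hs : 0 < s <= n by move: Hw; rewrite Mword_rcons => /andP[].
suff inv : forall Z, clos_refl_sym_trans_n1 _ (step n) (rcons u s) Z ->
    forall v t, Z = rcons v t -> lcm_split n s t u v.
  exact: inv (Mcong_chain Hc) v t erefl.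
clear v t Hc; move=> Z; elim=> [|Y {}Z Hst HY IHY] v t EZ.
  by case/rcons_inj: EZ => <- <-; rewrite /lcm_split eqxx; exact: Mcong_refl.
have HcY := chain_Mcong HY.
case/lastP: Y Hst HY IHY HcY => [|v' t'] Hst HY IHY HcY.
  by move: (Mcong_sumn HcY); rewrite sumn_rcons /=; lia.
apply: (split_step IH _ _ Hs (IHY v' t' erefl) Hst EZ).
- by rewrite -(Mcong_sumn HcY).
- by rewrite -(Mcong_Mword HcY).
Qed.

Lemma last_letters_split n u s v t : Mword n (rcons u s) ->
  Mcong n (rcons u s) (rcons v t) -> lcm_split n s t u v.
Proof. exact: (split_all (N := (sumn (rcons u s)).+1)). Qed.

Lemma rcons_split n c c0 c1 s t : Mword n c ->
  Mcong n c (rcons c0 s) -> Mcong n c (rcons c1 t) -> lcm_split n s t c0 c1.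
Proof.
move=> Hc E0 E1; apply: last_letters_split; first by rewrite -(Mcong_Mword E0).
exact: Mcong_trans (Mcong_sym E0) E1.
Qed.

Lemma right_cancel n a b c : Mword n a -> Mword n c ->
  Mcong n (a ++ c) (b ++ c) -> Mcong n a b.
Proof.
move=> Ha Hc; have Hw : Mword n (a ++ c) by rewrite Mword_cat Ha Hc.
exact: (cancel_below (@split_all n (sumn (a ++ c)).+1) (ltnSn _) Hw).
Qed.

Lemma lmult_rcancel n c a s : Mword n c -> Mword n s ->
  Mleft_multiple n (c ++ s) (a ++ s) -> Mleft_multiple n c a.
Proof.
move=> Hc Hs [b [Hb H]]; exists b; split => //.
by apply: right_cancel Hc Hs _; rewrite -catA.
Qed.

Lemma lcm_nil_l n b : Mword n b -> Mleft_lcm n b [::] b.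
Proof. by move=> Hb; split; [exact: lmult_nil|split=> [|c _ _ //]; exact: lmult_refl]. Qed.

Lemma lcm_nil_r n a : Mword n a -> Mleft_lcm n a a [::].
Proof. by move=> Ha; split; [exact: lmult_refl|split=> [|c _ //]; exact: lmult_nil]. Qed.

Lemma lcm_rcons_eq n m a b s : 0 < s <= n -> Mleft_lcm n m a b ->
  Mleft_lcm n (rcons m s) (rcons a s) (rcons b s).
Proof.
move=> Hs [Hma [Hmb Hmin]]; rewrite -!cats1.
have Hs' : Mword n [:: s] by rewrite /Mword /= Hs.
split; [exact: lmult_catr|split; first exact: lmult_catr].
move=> c Hc Hca Hcb; rewrite !cats1 in Hca Hcb.
have [c0 [Hc0 Ec Hc0a]] := lmult_rcons_inv Hc Hca.
apply: lmult_congl (Mcong_sym Ec) _; rewrite -cats1; apply/lmult_catr/Hmin => //.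
apply: lmult_rcancel Hc0 Hs' _; rewrite !cats1; exact: lmult_congl Ec Hcb.
Qed.

Lemma lcm_transport n m a g g' be w c0 c1 : Mword n c0 -> Mword n g ->
  Mleft_lcm n m a g -> Mcong n m (be ++ g) ->
  Mcong n c0 (w ++ g) -> Mcong n c1 (w ++ g') ->
  Mleft_multiple n c0 a -> Mleft_multiple n c1 (be ++ g').
Proof.
move=> Hc0 Hg [_ [_ Hmin]] Hm E0 E1 Hc0a.
have Hw : Mword n w by move: Hc0; rewrite (Mcong_Mword E0) Mword_cat => /andP[].
have [ga [Hga Hc0m]] := Hmin c0 Hc0 Hc0a (lmult_congl (Mcong_sym E0) (lmult_cat _ Hw)).
exists ga; split => //; apply: Mcong_trans E1 _; rewrite catA; apply: Mcong_catr.
apply: right_cancel Hw Hg _; rewrite -catA.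
exact: Mcong_trans (Mcong_sym E0) (Mcong_trans Hc0m (Mcong_catl _ Hm)).
Qed.

Lemma lcm_rcons_neq n a b s t m1 be m2 :
  0 < s <= n -> 0 < t <= n -> s != t -> Mword n be ->
  Mleft_lcm n m1 a (compl n s t) -> Mcong n m1 (be ++ compl n s t) ->
  Mleft_lcm n m2 (be ++ compl n t s) b ->
  Mleft_lcm n (rcons m2 t) (rcons a s) (rcons b t).
Proof.
move=> Hs Ht Nst Hbe Hm1 Em1 [Hm2a [Hm2b Hmin2]].
have [Hm1a _] := Hm1; split; [|split].
- rewrite -!cats1; apply: lmult_trans (lmult_catr [:: t] Hm2a) _; rewrite -catA.
  apply: lmult_congl (Mcong_catl _ (compl_lcm Hs Ht Nst)) _.
  rewrite catA; apply: lmult_congl (Mcong_catr _ Em1) _.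
  exact: lmult_catr.
- by rewrite -!cats1; exact: lmult_catr.
move=> c Hc Hca Hcb.
have [c0 [Hc0 Ec0 Hc0a]] := lmult_rcons_inv Hc Hca.
have [c1 [Hc1 Ec1 Hc1b]] := lmult_rcons_inv Hc Hcb.
have := rcons_split Hc Ec0 Ec1.
rewrite /lcm_split (negbTE Nst) => -[w [W0 W1]].
have Hc1m := lcm_transport Hc0 (Mword_compl Hs Ht Nst) Hm1 Em1 W0 W1 Hc0a.
apply: lmult_congl (Mcong_sym Ec1) _; rewrite -!cats1; apply: lmult_catr.
exact: Hmin2.
Qed.

Lemma lcm_exists_below n N a b c : sumn c < N -> Mword n a -> Mword n b -> Mword n c ->
  Mleft_multiple n c a -> Mleft_multiple n c b ->
  exists m, Mword n m /\ Mleft_lcm n m a b.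
Proof.
elim: N a b c => [//|N IH] a b c HN Ha Hb Hc.
case/lastP: a Ha => [|a s] Ha.
  by move=> _ _; exists b; split=> //; exact: lcm_nil_l.
case/lastP: b Hb => [|b t] Hb.
  by move=> _ _; exists (rcons a s); split=> //; exact: lcm_nil_r.
move: (Ha) (Hb); rewrite !Mword_rcons => /andP[Ha' Hs] /andP[Hb' Ht] Hca Hcb.
have [c0 [Hc0 Ec0 Hc0a]] := lmult_rcons_inv Hc Hca.
have [c1 [Hc1 Ec1 Hc1b]] := lmult_rcons_inv Hc Hcb.
have Wc0 : sumn c0 < N by move: HN; rewrite (Mcong_sumn Ec0) sumn_rcons; lia.
have Wc1 : sumn c1 < N by move: HN; rewrite (Mcong_sumn Ec1) sumn_rcons; lia.
have := rcons_split Hc Ec0 Ec1.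
rewrite /lcm_split; case: (eqVneq s t) => [<- E01|Nst [w [W0 W1]]].
  have [m [Hm Hlcm]] := IH a b c0 Wc0 Ha' Hb' Hc0 Hc0a (lmult_congl (Mcong_sym E01) Hc1b).
  by exists (rcons m s); rewrite Mword_rcons Hm Hs; split=> //; exact: lcm_rcons_eq.
have Hw : Mword n w by move: Hc0; rewrite (Mcong_Mword W0) Mword_cat => /andP[].
have Hg := Mword_compl Hs Ht Nst.
have [m1 [Hm1 Hlcm1]] := IH a (compl n s t) c0 Wc0 Ha' Hg Hc0 Hc0a
  (lmult_congl (Mcong_sym W0) (lmult_cat _ Hw)).
have [be [Hbe Em1]] := Hlcm1.2.1.
have Hc1m := lcm_transport Hc0 Hg Hlcm1 Em1 W0 W1 Hc0a.
have Hbg' : Mword n (be ++ compl n t s).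
  by rewrite Mword_cat Hbe Mword_compl // eq_sym.
have [m2 [Hm2 Hlcm2]] := IH (be ++ compl n t s) b c1 Wc1 Hbg' Hb' Hc1 Hc1m Hc1b.
exists (rcons m2 t); rewrite Mword_rcons Hm2 Ht; split => //.
exact: lcm_rcons_neq Hlcm1 Em1 Hlcm2.
Qed.

Theorem proposition4p12 (n : nat) : 1 <= n ->
  (* right-cancellativity *)
  (forall a b c : seq nat, Mword n a -> Mword n b -> Mword n c ->
     Mcong n (a ++ c) (b ++ c) -> Mcong n a b) /\
  (* conditional left-lcms *)
  (forall a b : seq nat, Mword n a -> Mword n b ->
     (exists c, Mword n c /\ Mleft_multiple n c a /\ Mleft_multiple n c b) ->
     exists m, Mword n m /\ Mleft_lcm n m a b).
Proof.
move=> _; split.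
- by move=> a b c Ha _ Hc; exact: right_cancel.
- move=> a b Ha Hb [c [Hc [Hca Hcb]]].
  exact: (@lcm_exists_below n (sumn c).+1 a b c).
Qed.
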